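(* Let $K$ be a positive commutative semiring with its natural (pre)order. Let $C$ be a collection of $\mathrm{FO}(=,\neq\!\bot,\leq)$-definable atoms and $D$ a collection of $\mathrm{FO}(\bot?,\neq,\not\leq)$-definable atoms. Let $\phi\in\mathrm{FO}(C)$ and $\psi\in\mathrm{FO}(D)$. Let $\mathfrak A$ be a first-order $\tau$-structure with finite domain $A$, let $\mathbb{X}$ be a $K$-team of $\mathfrak A$, and let $X=\chi_K\circ\mathbb{X}$ be its possibilistic collapse. Then: (i) $\mathfrak A\models_{\mathbb{X}}\phi$ (in $K$-team semantics) implies $\mathfrak A\models_{X}\phi$ (in $\mathbb{B}$-team semantics); (ii) if moreover $K$ is $+$-dense, then $\mathfrak A\models_{X}\psi$ implies $\mathfrak A\models_{\mathbb{X}}\psi$.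
   Context: Commutative semiring $(K,+,\cdot,0,1)$. It is positive if $a+b=0$ implies $a=b=0$, and $ab=0$ implies $a=0$ or $b=0$. It is $+$-dense if every nonzero $a$ equals $b+c$ for some nonzero $b,c$. The natural order is $a\leq b$ iff $\exists c:a+c=b$. $\mathbb{B}=(\{0,1\},\vee,\wedge,0,1)$. $\chi_K\colon K\to\mathbb{B}$ maps $0$ to $0$ and nonzero elements to $1$. $K$-teams: $\mathrm{As}(V,A)$ is the set of assignments $V\to A$ for a finite variable set $V$. A $K$-team is $\mathbb{X}\colon\mathrm{As}(V,A)\to K$, with support $\mathrm{Sup}(\mathbb{X})=\{s:\mathbb{X}(s)\neq0\}$. Its possibilistic collapse is the $\mathbb{B}$-team $\chi_K\circ\mathbb{X}$. Fix a total order on variables, $V=\{x_1<\dots<x_k\}$, and put $\vec a_s=(s(x_1),\dots,s(x_k))$. $\pi_{\mathfrak A,\mathbb{X}}$ is the $K$-interpretation over $A$ for the vocabulary $\tau\cup\{R\}$, $R$ fresh of arity $k$, given by: - $\tau$-facts true in $\mathfrak A$ get $1$, false ones get $0$, and their negations get the opposite value; - $R(\vec a_s)\mapsto\mathbb{X}(s)$; - $\neg R(\vec a_s)\mapsto1$ if $\mathbb{X}(s)=0$, and $0$ otherwise. A $K$-interpretation is extended to formulae under assignments as follows: - literals get their $\pi$-values; - $x=y$ and $x\neq y$ get $1$ or $0$ according to their truth; - $\wedge$ is product and $\vee$ is sum; - $\forall$ is the product and $\exists$ the sum over $A$; - $\neg$ is evaluated via negation normal form. A formula (in)equality $\phi*\psi$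 has value $1$ if $[\![\phi]\!]*[\![\psi]\!]$ holds in the semiring, and $0$ otherwise. $\bot$ is a formula of constant value $0$. An atom $\alpha$ comes with, for each finite ordered domain $V$ containing its variables, a defining sentence $\phi_{\alpha,V}$ over $\tau\cup\{R\}$. Examples are dependence, independence and inclusion atoms, defined by sentences such as $\forall\vec u(\theta_{\vec i}(\vec u)\leq\theta_{\vec j}(\vec u))$ with $\theta_{\vec i}(\vec u)=\exists\vec x(R(\vec x)\wedge\vec x_{\vec i}=\vec u)$. It is $\mathcal L$-definable if all $\phi_{\alpha,V}\in\mathcal L$. $\mathrm{FO}(=,\neq\!\bot,\leq)$ (resp. $\mathrm{FO}(\bot?,\neq,\not\leq)$) consists of formulae built from first-order literals and formula (in)equalities of the forms $\phi=\psi$, $\phi\neq\bot$, $\phi\leq\psi$ (resp. $\phi=\bot$, $\phi\neq\psi$, $\phi\not\leq\psi$) between first-order formulae, using $\wedge,\vee,\forall,\exists$. $\mathrm{FO}(C)$ is negation-normal-form first-order logic over $\tau$ extended with (unnegated) atoms from $C$. $K$-team semantics for a $K$-team $\mathbb{X}$ with domain $V$ (quantified variables assumed not in the current domain): - $\mathfrak A\models_{\mathbb{X}}l$ for a first-order literal $l$ iff $\mathfrak A\models_s l$ for all $s\in\mathrm{Sup}(\mathbb{X})$; - $\mathfrak A\models_{\mathbb{X}}\alpha$ for an atom iff $[\![\phi_{\alpha,V}]\!]_{\pi_{\mathfrak A,\mathbb{X}}}\neq0$; - $\wedge$ is conjunction; - $\mathfrak A\models_{\mathbb{X}}\psi\vee\theta$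 iff $\mathfrak A\models_{\mathbb{Y}}\psi$ and $\mathfrak A\models_{\mathbb{Z}}\theta$ for some $\mathbb{Y},\mathbb{Z}$ with $\mathbb{Y}(s)+\mathbb{Z}(s)=\mathbb{X}(s)$ for all $s$; - $\mathfrak A\models_{\mathbb{X}}\forall x\psi$ iff $\mathfrak A\models_{\mathbb{Y}}\psi$ where $\mathbb{Y}(s[a/x])=\mathbb{X}(s)$ for all $s$ and all $a\in A$; - $\mathfrak A\models_{\mathbb{X}}\exists x\psi$ iff $\mathfrak A\models_{\mathbb{Y}}\psi$ for some $\mathbb{Y}$ with $\mathbb{X}(s)=\sum_{a\in A}\mathbb{Y}(s[a/x])$ for all $s$. For $K=\mathbb{B}$ this is standard team semantics. *)

From HB Require Import structures.
From mathcomp Require Import all_boot all_order all_algebra.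
From Stdlib Require Import ClassicalEpsilon.
Set Implicit Arguments. Unset Strict Implicit. Unset Printing Implicit Defensive.
Import GRing.Theory.
Local Open Scope ring_scope.

Definition positive_sr (K : comNzSemiRingType) : Prop :=
  (forall a b : K, a + b = 0 -> a = 0 /\ b = 0) /\
  (forall a b : K, a * b = 0 -> a = 0 \/ b = 0).

Definition plus_dense (K : comNzSemiRingType) : Prop :=
  forall a : K, a != 0 -> exists b c : K, b != 0 /\ c != 0 /\ a = b + c.

Definition nat_le (K : comNzSemiRingType) (a b : K) : Prop :=
  exists c, a + c = b.

Definition boolsr : Type := bool.
HB.instance Definition _ := Choice.on boolsr.
Lemma boolsr_addA : associative (orb : boolsr -> boolsr -> boolsr).
Proof. by move=> [] [] []. Qed.
Lemma boolsr_addC : commutative (orb : boolsr -> boolsr -> boolsr).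
Proof. by move=> [] []. Qed.
Lemma boolsr_add0 : left_id (false : boolsr) orb.
Proof. by move=> []. Qed.
HB.instance Definition _ :=
  GRing.isNmodule.Build boolsr boolsr_addA boolsr_addC boolsr_add0.
Lemma boolsr_mulA : associative (andb : boolsr -> boolsr -> boolsr).
Proof. by move=> [] [] []. Qed.
Lemma boolsr_mulC : commutative (andb : boolsr -> boolsr -> boolsr).
Proof. by move=> [] []. Qed.
Lemma boolsr_mul1 : left_id (true : boolsr) andb.
Proof. by move=> []. Qed.
Lemma boolsr_mulDl : left_distributive (andb : boolsr -> boolsr -> boolsr) orb.
Proof. by move=> [] [] []. Qed.
Lemma boolsr_mul0 : left_zero (false : boolsr) andb.
Proof. by move=> []. Qed.
Lemma boolsr_1n0 : (true : boolsr) != false.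
Proof. by []. Qed.
HB.instance Definition _ :=
  GRing.Nmodule_isComNzSemiRing.Build boolsr boolsr_mulA boolsr_mulC boolsr_mul1
    boolsr_mulDl boolsr_mul0 boolsr_1n0.

Definition chiK (K : comNzSemiRingType) (a : K) : boolsr := (a != 0).

Definition pdec (P : Prop) : bool :=
  if excluded_middle_informative P then true else false.

(* Variables are natural numbers, totally ordered by <.  A finite ordered
   variable domain V = {x1 < ... < xk} is a strictly increasing seq nat;
   an assignment s : V -> A is the k-tuple (s(x1),...,s(xk)) = vec a_s. *)

Definition assign (A : Type) (V : seq nat) := (size V).-tuple A.

Definition lk (A : Type) (V : seq nat) (s : seq A) (y : nat) : option A :=
  onth s (index y V).

Definition ins (x : nat) (V : seq nat) : seq nat :=
  [seq y <- V | (y < x)%N] ++ x :: [seq y <- V | (x < y)%N].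

Definition ext (A : Type) (x : nat) (V : seq nat) (s : assign A V) (a : A)
  : assign A (ins x V) :=
  map_tuple (fun y => if y == x then a else nth a s (index y V)) (in_tuple (ins x V)).

(* sym/ar : a relational vocabulary tau; k : arity of the fresh symbol R. *)

Inductive cmpop := CEq | CNeq | CLe | CNle.

Definition negop (o : cmpop) : cmpop :=
  match o with CEq => CNeq | CNeq => CEq | CLe => CNle | CNle => CLe end.

Section KForm.
Variables (sym : Type) (ar : sym -> nat) (k : nat).

Inductive kform : Type :=
| KRel (r : sym) (xs : (ar r).-tuple nat) (pos : bool)
| KR (xs : k.-tuple nat) (pos : bool)
| KEq (x y : nat) (pos : bool)
| KBot
| KNot (f : kform)
| KAnd (f g : kform)
| KOr (f g : kform)
| KAll (x : nat) (f : kform)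
| KEx (x : nat) (f : kform)
| KCmp (o : cmpop) (f g : kform).                         (* formula (in)equality *)

Fixpoint is_fo (f : kform) : bool :=
  match f with
  | KRel _ _ _ | KR _ _ | KEq _ _ _ => true
  | KBot | KCmp _ _ _ => false
  | KNot g | KAll _ g | KEx _ g => is_fo g
  | KAnd g h | KOr g h => is_fo g && is_fo h
  end.

Fixpoint in_frag (okcmp : cmpop -> kform -> kform -> bool) (f : kform) : bool :=
  match f with
  | KRel _ _ _ | KR _ _ | KEq _ _ _ => true
  | KBot | KNot _ => false
  | KAnd g h | KOr g h => in_frag okcmp g && in_frag okcmp h
  | KAll _ g | KEx _ g => in_frag okcmp g
  | KCmp o g h => okcmp o g h
  end.

Definition is_bot (f : kform) : bool := if f is KBot then true else false.

Definition ok1 (o : cmpop) (g h : kform) : bool :=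
  match o with
  | CEq => is_fo g && is_fo h
  | CNeq => is_fo g && is_bot h
  | CLe => is_fo g && is_fo h
  | CNle => false
  end.

Definition ok2 (o : cmpop) (g h : kform) : bool :=
  match o with
  | CEq => is_fo g && is_bot h
  | CNeq => is_fo g && is_fo h
  | CNle => is_fo g && is_fo h
  | CLe => false
  end.

Definition frag1 := in_frag ok1.
Definition frag2 := in_frag ok2.

End KForm.

Section KEval.
Variables (sym : Type) (ar : sym -> nat) (A : finType)
          (rel : forall r : sym, (ar r).-tuple A -> bool)
          (K : comNzSemiRingType) (k : nat) (X : k.-tuple A -> K).

Definition env := nat -> option A.

Definition upd (e : env) (x : nat) (a : A) : env :=
  fun y => if y == x then Some a else e y.

Definition vals n (e : env) (xs : n.-tuple nat) : option (n.-tuple A) :=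
  insub (pmap id (map e xs)).

Definition holdsK (o : cmpop) (a b : K) : Prop :=
  match o with
  | CEq => a = b
  | CNeq => a <> b
  | CLe => nat_le a b
  | CNle => ~ nat_le a b
  end.

Definition b2K (b : bool) : K := if b then 1 else 0.

(* [[f]] under env e; pol = false means f occurs negated (NNF evaluation) *)
Fixpoint keval (pol : bool) (f : kform ar k) (e : env) : K :=
  match f with
  | KRel r xs p =>
      if vals e xs is Some t then b2K (rel t == (p == pol)) else 0
  | KR xs p =>
      if vals e xs is Some t then
        (if p == pol then X t else b2K (X t == 0))
      else 0
  | KEq x y p =>
      match e x, e y with
      | Some a, Some b => b2K ((a == b) == (p == pol))
      | _, _ => 0
      end
  | KBot => b2K (~~ pol)
  | KNot g => keval (~~ pol) g e
  | KAnd g h => if pol then keval pol g e * keval pol h e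
                else keval pol g e + keval pol h e
  | KOr g h => if pol then keval pol g e + keval pol h e
               else keval pol g e * keval pol h e
  | KAll x g => if pol then \prod_(a : A) keval pol g (upd e x a)
                else \sum_(a : A) keval pol g (upd e x a)
  | KEx x g => if pol then \sum_(a : A) keval pol g (upd e x a)
               else \prod_(a : A) keval pol g (upd e x a)
  | KCmp o g h =>
      b2K (pdec (holdsK (if pol then o else negop o)
                        (keval true g e) (keval true h e)))
  end.

Definition sent_val (f : kform ar k) : K := keval true f (fun _ => None).

End KEval.

Section Team.
Variables (sym : Type) (ar : sym -> nat) (At : Type).

Inductive tform : Type :=
| TRel (r : sym) (xs : (ar r).-tuple nat) (pos : bool)
| TEq (x y : nat) (pos : bool)
| TAtom (a : At)
| TAnd (f g : tform)
| TOr (f g : tform)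
| TAll (x : nat) (f : tform)
| TEx (x : nat) (f : tform).

Fixpoint atoms_in (C : At -> Prop) (f : tform) : Prop :=
  match f with
  | TRel _ _ _ | TEq _ _ _ => True
  | TAtom a => C a
  | TAnd g h | TOr g h => atoms_in C g /\ atoms_in C h
  | TAll _ g | TEx _ g => atoms_in C g
  end.

Variable avars : At -> seq nat.

Fixpoint wf (V : seq nat) (f : tform) : Prop :=
  match f with
  | TRel r xs _ => forall i, tnth xs i \in V
  | TEq x y _ => x \in V /\ y \in V
  | TAtom a => {subset avars a <= V}
  | TAnd g h | TOr g h => wf V g /\ wf V h
  | TAll x g | TEx x g => x \notin V /\ wf (ins x V) g
  end.

(* an atom has, for every finite ordered domain V containing its
   variables, a defining sentence adef a V over tau u {R}, R of arity |V| *)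
Variable adef : At -> forall V : seq nat, kform ar (size V).

Definition definable (L : forall k, kform ar k -> bool) (a : At) : Prop :=
  forall V : seq nat, sorted ltn V -> {subset avars a <= V} -> L _ (adef a V).

Variables (A : finType) (rel : forall r : sym, (ar r).-tuple A -> bool).

Definition lit_rel (V : seq nat) (s : assign A V) r (xs : (ar r).-tuple nat)
  (pos : bool) : Prop :=
  exists t : (ar r).-tuple A,
    (forall i, lk V s (tnth xs i) = Some (tnth t i)) /\ rel t = pos.

Definition lit_eq (V : seq nat) (s : assign A V) (x y : nat) (pos : bool) : Prop :=
  exists a b, lk V s x = Some a /\ lk V s y = Some b /\ (a == b) = pos.

Fixpoint tsat (K : comNzSemiRingType) (f : tform) :
  forall V : seq nat, (assign A V -> K) -> Prop :=
  match f with
  | TRel r xs p => fun V X => forall s, X s != 0 -> lit_rel s xs p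
  | TEq x y p => fun V X => forall s, X s != 0 -> lit_eq s x y p
  | TAtom a => fun V X => sent_val rel X (adef a V) != 0
  | TAnd g h => fun V X => tsat g X /\ tsat h X
  | TOr g h => fun V X =>
      exists Y Z : assign A V -> K,
        (forall s, Y s + Z s = X s) /\ tsat g Y /\ tsat h Z
  | TAll x g => fun V X =>
      exists Y : assign A (ins x V) -> K,
        (forall s a, Y (ext x s a) = X s) /\ tsat g Y
  | TEx x g => fun V X =>
      exists Y : assign A (ins x V) -> K,
        (forall s, X s = \sum_(a : A) Y (ext x s a)) /\ tsat g Y
  end.

End Team.

Definition collapse (A : Type) (V : seq nat) (K : comNzSemiRingType)
  (X : assign A V -> K) : assign A V -> boolsr :=
  fun s => chiK (X s).

(* Positivity of K says exactly that chi_K : K -> B is a semiring morphism.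
   Hence chi_K commutes with the K-evaluation of first-order sentences over
   tau u {R} (Lemma [keval_collapse_fo]), and comparisons between such values
   are transported in one direction: equalities, non-vanishing and the
   natural order survive chi_K, while inequalities, vanishing and the
   negated order are reflected by it.  Propagating this through sums and
   products gives chi_K([[phi]]_X) ==> [[phi]]_{chi_K o X} for
   FO(=,<>bot,<=) sentences and the converse for FO(bot?,<>,not<=) ones
   ([keval_frag1], [keval_frag2]): this settles the atoms.

   The team connectives are then handled by induction on the formula:
   (i) the collapse of a K-witness (split, duplicated or supplemented team)
   is a B-witness; (ii) conversely every Boolean split of chi_K o X lifts to
   a K-split of X when K is +-dense ([split_team2], [split_team_sum]); the
   bijection between (s, a) and s[a/x] transfers teams across quantifiers. *)

From HB Require Import structures.
From mathcomp Require Import all_boot all_order all_algebra.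
From Stdlib Require Import ClassicalEpsilon FunctionalExtensionality.
Set Implicit Arguments. Unset Strict Implicit. Unset Printing Implicit Defensive.
Import GRing.Theory.

Lemma ins_sorted x V : sorted ltn V -> sorted ltn (ins x V).
Proof.
move=> sV; rewrite sorted_pairwise; last exact: ltn_trans.
rewrite /ins pairwise_cat pairwise_cons -!sorted_pairwise; try exact: ltn_trans.
rewrite !sorted_filter //; try exact: ltn_trans.
rewrite andbT; apply/andP; split.
  apply/allrelP => y z; rewrite mem_filter => /andP[yx _].
  rewrite inE mem_filter => /orP[/eqP->//|/andP[xz _]]; exact: ltn_trans yx xz.
by apply/allP => y; rewrite mem_filter => /andP[].
Qed.

(* The filtered halves of [ins x V] avoid x, so uniqueness is preserved. *)
Lemma ins_uniq x V : uniq V -> uniq (ins x V).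
Proof.
move=> uV; rewrite /ins cat_uniq /= !filter_uniq // !mem_filter ltnn /= !andbT.
by apply/hasPn => y; rewrite !mem_filter => /andP[xy _]; rewrite ltnNge ltnW.
Qed.

Lemma mem_insx x V : x \in ins x V.
Proof. by rewrite /ins mem_cat inE eqxx orbT. Qed.

Lemma mem_insV x V y : y \in V -> y != x -> y \in ins x V.
Proof.
move=> yV yx; rewrite /ins mem_cat inE !mem_filter yV !andbT (negbTE yx) /=.
by case: ltngtP yx => //; rewrite eqxx.
Qed.

Lemma mem_ins_inv x V y : y \in ins x V -> y != x -> y \in V.
Proof.
rewrite /ins mem_cat inE !mem_filter.
by case/orP=> [/andP[_ ->]//|/orP[/eqP-> /eqP//|/andP[_ ->]//]].
Qed.

Lemma index_ins_x x V : (index x (ins x V) < size (ins x V))%N.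
Proof. by rewrite index_mem mem_insx. Qed.

(* For x \notin V, the extension map (s, a) |-> s[a/x] is a bijection onto
   the assignments of ins x V; [restrict] and [xval] are its inverse. *)
Section Extension.
Variables (A : Type) (x : nat) (V : seq nat).

Definition xval (t : assign A (ins x V)) : A :=
  tnth t (Ordinal (index_ins_x x V)).

Definition restrict (t : assign A (ins x V)) : assign A V :=
  map_tuple (fun y => nth (xval t) t (index y (ins x V))) (in_tuple V).

Hypothesis uV : uniq V.

Lemma nth_ext (s : assign A V) a d y : y \in ins x V ->
  nth d (ext x s a) (index y (ins x V)) = if y == x then a else nth a s (index y V).
Proof.
by move=> yi; rewrite /ext /= (nth_map 0) ?index_mem // nth_index.
Qed.

Lemma xval_ext (s : assign A V) a : xval (ext x s a) = a.
Proof. by rewrite /xval (tnth_nth a) nth_ext ?mem_insx // eqxx. Qed.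

Lemma ext_restrict (t : assign A (ins x V)) : ext x (restrict t) (xval t) = t.
Proof.
apply/val_inj/(@eq_from_nth _ (xval t)); first by rewrite /= size_map size_tuple.
move=> i; rewrite /= size_map => ii; rewrite (nth_map 0) //.
have yi : nth 0 (ins x V) i \in ins x V by rewrite mem_nth.
have ui := ins_uniq x uV.
case: eqP => [e|/eqP ne].
  have := index_uniq 0 ii ui; rewrite e => xi.
  by rewrite {1}/xval (tnth_nth (xval t)) /= xi.
have yV := mem_ins_inv yi ne.
by rewrite /restrict (nth_map 0) ?index_mem // nth_index // index_uniq.
Qed.

Hypothesis xV : x \notin V.

Lemma restrict_ext (s : assign A V) a : restrict (ext x s a) = s.
Proof.
apply/val_inj/(@eq_from_nth _ a); first by rewrite /= size_map size_tuple.
move=> i; rewrite /= size_map => iV.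
have yx : (nth 0 V i == x) = false.
  by apply/negbTE/eqP => e; move: xV; rewrite -e mem_nth.
rewrite (nth_map 0) // xval_ext nth_ext ?mem_insV ?mem_nth ?yx //.
by rewrite index_uniq.
Qed.

End Extension.

Local Open Scope ring_scope.

Lemma addbsrE (u v : boolsr) : u + v = u || v. Proof. by []. Qed.
Lemma mulbsrE (u v : boolsr) : u * v = u && v. Proof. by []. Qed.
Lemma b2K_bool (b : bool) : b2K boolsr b = b. Proof. by case: b. Qed.

Lemma sum_bsr (I : Type) (l : seq I) (P : I -> bool) :
  \sum_(a <- l) (P a : boolsr) = has P l.
Proof. by elim: l => [|a l IH]; rewrite ?big_nil ?big_cons //= addbsrE IH. Qed.

Lemma pdecP (P : Prop) : pdec P <-> P.
Proof. by rewrite /pdec; case: excluded_middle_informative. Qed.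

(* Positivity of K is what makes chi_K a semiring morphism. *)
Section CollapseMorphism.
Variables (K : comNzSemiRingType) (HK : positive_sr K).

Lemma chiK_eq0 (a : K) : (chiK a == 0) = (a == 0).
Proof. by rewrite /chiK; case: (a == 0). Qed.

Lemma chiK_neq0 (a : K) : (chiK a != 0) = (a != 0).
Proof. by rewrite chiK_eq0. Qed.

Lemma chiK0 : chiK (0 : K) = 0. Proof. by rewrite /chiK eqxx. Qed.
Lemma chiK1 : chiK (1 : K) = 1. Proof. by rewrite /chiK oner_neq0. Qed.
Lemma chiK_b2K (b : bool) : chiK (b2K K b) = b2K boolsr b.
Proof. by case: b; rewrite /b2K ?chiK1 ?chiK0. Qed.

Lemma chiKD (a b : K) : chiK (a + b) = chiK a + chiK b.
Proof.
rewrite /chiK addbsrE; have [->|ha] := eqVneq a 0; first by rewrite add0r.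
by apply/negP => /eqP /HK.1 [/eqP]; rewrite (negbTE ha).
Qed.

Lemma chiKM (a b : K) : chiK (a * b) = chiK a * chiK b.
Proof.
rewrite /chiK mulbsrE; have [->|ha] := eqVneq a 0; first by rewrite mul0r eqxx.
have [->|hb] := eqVneq b 0; first by rewrite mulr0 eqxx.
by apply/negP => /eqP /HK.2 [] /eqP; [rewrite (negbTE ha)|rewrite (negbTE hb)].
Qed.

Lemma chiK_sum (I : Type) (r : seq I) P (F : I -> K) :
  chiK (\sum_(i <- r | P i) F i) = \sum_(i <- r | P i) chiK (F i).
Proof. exact: (big_morph _ chiKD chiK0). Qed.

Lemma chiK_prod (I : Type) (r : seq I) P (F : I -> K) :
  chiK (\prod_(i <- r | P i) F i) = \prod_(i <- r | P i) chiK (F i).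
Proof. exact: (big_morph _ chiKM chiK1). Qed.

Lemma natle_chi (a b : K) : nat_le a b -> nat_le (chiK a) (chiK b).
Proof. by move=> [c <-]; exists (chiK c); rewrite chiKD. Qed.

End CollapseMorphism.

Section CollapseEvaluation.
Variables (K : comNzSemiRingType) (HK : positive_sr K).
Variables (sym : Type) (ar : sym -> nat) (A : finType)
          (rel : forall r : sym, (ar r).-tuple A -> bool)
          (k : nat) (X : k.-tuple A -> K).

Let cX : k.-tuple A -> boolsr := fun t => chiK (X t).

Lemma keval_collapse_fo (f : kform ar k) : is_fo f -> forall pol e,
  chiK (keval rel X pol f e) = keval rel cX pol f e.
Proof.
elim: f => [r xs p | xs p | x y p | | g IH | g IHg h IHh | g IHg h IHh
  | x g IH | x g IH | o g IHg h IHh] //= Hf pol e.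
- by case: vals => [t|]; rewrite ?chiK_b2K ?chiK0.
- case: vals => [t|]; last by rewrite chiK0.
  by case: (p == pol); rewrite ?chiK_b2K // /cX chiK_eq0.
- by case: (e x) => [a|]; case: (e y) => [b|]; rewrite ?chiK_b2K ?chiK0.
- exact: IH.
- by case/andP: Hf => Hg Hh; case: pol; rewrite ?(chiKM HK) ?(chiKD HK) IHg ?IHh.
- by case/andP: Hf => Hg Hh; case: pol; rewrite ?(chiKM HK) ?(chiKD HK) IHg ?IHh.
- by case: pol; rewrite ?(chiK_prod HK) ?(chiK_sum HK); apply: eq_bigr => a _; rewrite IH.
- by case: pol; rewrite ?(chiK_prod HK) ?(chiK_sum HK); apply: eq_bigr => a _; rewrite IH.
Qed.

Section FragmentComparison.
Variable le : boolsr -> boolsr -> bool.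
Hypothesis le_refl : reflexive le.
Hypothesis le_add : forall u u' v v', le u u' -> le v v' -> le (u + v) (u' + v').
Hypothesis le_mul : forall u u' v v', le u u' -> le v v' -> le (u * v) (u' * v').
Variable okcmp : cmpop -> kform ar k -> kform ar k -> bool.
Hypothesis le_cmp : forall o g h e, okcmp o g h ->
  le (chiK (keval rel X true (KCmp o g h) e)) (keval rel cX true (KCmp o g h) e).

Lemma keval_frag_le (f : kform ar k) : in_frag okcmp f -> forall e,
  le (chiK (keval rel X true f e)) (keval rel cX true f e).
Proof.
elim: f => [r xs p | xs p | x y p | | g IH | g IHg h IHh | g IHg h IHh
  | x g IH | x g IH | o g IHg h IHh] Hf e;
  try by rewrite keval_collapse_fo //; apply: le_refl.
all: move: Hf => //=.
- by case/andP=> /IHg Hg /IHh Hh; rewrite (chiKM HK); apply: le_mul.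
- by case/andP=> /IHg Hg /IHh Hh; rewrite (chiKD HK); apply: le_add.
- by move/IH=> Hg; rewrite (chiK_prod HK); apply: (big_ind2 le).
- by move/IH=> Hg; rewrite (chiK_sum HK); apply: (big_ind2 le).
- exact: le_cmp.
Qed.

End FragmentComparison.

Lemma pdec_imply (P Q : Prop) : (P -> Q) -> b2K boolsr (pdec P) ==> b2K boolsr (pdec Q).
Proof. by rewrite !b2K_bool => PQ; apply/implyP => /pdecP/PQ/pdecP. Qed.

(* FO(=, <>bot, <=): equality, non-vanishing and the natural order are
   preserved by chi_K. *)
Lemma keval_frag1 (f : kform ar k) : frag1 f -> forall e,
  chiK (keval rel X true f e) ==> keval rel cX true f e.
Proof.
apply: keval_frag_le => [u|u u' v v'|u u' v v'|o g h e]; first exact: implybb.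
- by rewrite !addbsrE; case: u; case: u'; case: v; case: v'.
- by rewrite !mulbsrE; case: u; case: u'; case: v; case: v'.
case: o => //= /andP[Hg Hh]; rewrite chiK_b2K; apply: pdec_imply;
  rewrite -(keval_collapse_fo Hg).
- by rewrite -(keval_collapse_fo Hh) => ->.
- by case: h Hh => //= _ Hne; rewrite /chiK; case: eqP.
- by rewrite -(keval_collapse_fo Hh); apply: natle_chi.
Qed.

(* FO(bot?, <>, not <=): vanishing, inequality and the negated natural order
   are reflected by chi_K. *)
Lemma keval_frag2 (f : kform ar k) : frag2 f -> forall e,
  keval rel cX true f e ==> chiK (keval rel X true f e).
Proof.
apply: (keval_frag_le (le := fun u v => v ==> u))
  => [u|u u' v v'|u u' v v'|o g h e] /=; first exact: implybb.
- by rewrite !addbsrE; case: u; case: u'; case: v; case: v'.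
- by rewrite !mulbsrE; case: u; case: u'; case: v; case: v'.
case: o => //= /andP[Hg Hh]; rewrite chiK_b2K; apply: pdec_imply;
  rewrite -(keval_collapse_fo Hg).
- by case: h Hh => //= _; rewrite /chiK; case: eqP.
- by rewrite -(keval_collapse_fo Hh) => Hne E; apply: Hne; rewrite E.
- by rewrite -(keval_collapse_fo Hh) => Hnle /(natle_chi HK).
Qed.

End CollapseEvaluation.

Section Splitting.
Variables (K : comNzSemiRingType) (Hd : plus_dense K).

Lemma split2 (c : K) (p q : bool) : (c != 0) = p || q ->
  exists y z : K, y + z = c /\ (y != 0) = p /\ (z != 0) = q.
Proof.
case: p; case: q => /= H.
- by have [b [d [hb [hd ->]]]] := Hd H; exists b, d; rewrite hb hd.
- by exists c, 0; rewrite addr0 H eqxx.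
- by exists 0, c; rewrite add0r H eqxx.
- by exists 0, 0; rewrite addr0 eqxx; move/negbT/negPn/eqP: H.
Qed.

Lemma split_seq (I : eqType) (l : seq I) (P : I -> bool) : uniq l ->
  forall c : K, (c != 0) = has P l ->
  exists f : I -> K, \sum_(a <- l) f a = c /\ forall a, a \in l -> (f a != 0) = P a.
Proof.
elim: l => [|a0 l IH] /= Hu c Hc.
  by exists (fun _ => 0); rewrite big_nil; move/negbT/negPn/eqP: Hc.
case/andP: Hu => a0l ul.
have [v [c' [Hvc [Hv Hc']]]] := split2 Hc.
have [f' [Hs Hm]] := IH ul c' Hc'.
exists (fun a => if a == a0 then v else f' a); split.
  rewrite big_cons eqxx -Hvc -Hs; congr (_ + _).
  by apply: eq_big_seq => a al; case: eqP => // e; move: a0l; rewrite -e al.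
by move=> a; rewrite inE; case: eqP => [->//|ne /= al]; apply: Hm.
Qed.

Lemma split_team2 (T : Type) (X : T -> K) (Y Z : T -> boolsr) :
  (forall s, Y s + Z s = chiK (X s)) ->
  exists Y' Z' : T -> K, (forall s, Y' s + Z' s = X s) /\
    (fun s => chiK (Y' s)) = Y /\ (fun s => chiK (Z' s)) = Z.
Proof.
move=> HYZ.
have [F HF] : exists F : T -> K * K, forall s,
    (F s).1 + (F s).2 = X s /\ chiK (F s).1 = Y s /\ chiK (F s).2 = Z s.
  apply: (ClassicalEpsilon.choice (fun s (p : K * K) =>
    p.1 + p.2 = X s /\ chiK p.1 = Y s /\ chiK p.2 = Z s)) => s.
  have [y [z [Hyz [Hy Hz]]]] := split2 (esym (HYZ s)).
  by exists (y, z).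
exists (fun s => (F s).1), (fun s => (F s).2); split; first by move=> s; case: (HF s).
by split; apply: functional_extensionality => s; case: (HF s) => _ [].
Qed.

Lemma split_team_sum (T : Type) (A : finType) (X : T -> K) (Y : T -> A -> boolsr) :
  (forall s, chiK (X s) = \sum_(a : A) Y s a) ->
  exists F : T -> A -> K,
    (forall s, X s = \sum_(a : A) F s a) /\ (forall s a, chiK (F s a) = Y s a).
Proof.
move=> HY.
have [F HF] : exists F : T -> A -> K, forall s,
    X s = \sum_(a : A) F s a /\ forall a, chiK (F s a) = Y s a.
  apply: (ClassicalEpsilon.choice (fun s (G : A -> K) =>
    X s = \sum_(a : A) G a /\ forall a, chiK (G a) = Y s a)) => s.
  have [G [HG HGY]] : exists G : A -> K, \sum_(a <- index_enum A) G a = X s /\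
      forall a, a \in index_enum A -> (G a != 0) = Y s a.
    by apply: split_seq; rewrite ?index_enum_uniq // -sum_bsr -HY.
  by exists G; split=> [|a]; rewrite ?HG // /chiK HGY ?mem_index_enum.
by exists F; split=> [s|s a]; case: (HF s).
Qed.

End Splitting.

Section TeamTransfer.
Variables (K : comNzSemiRingType) (HK : positive_sr K).
Variables (sym : Type) (ar : sym -> nat) (At : Type) (avars : At -> seq nat)
  (adef : At -> forall V : seq nat, kform ar (size V))
  (A : finType) (rel : forall r : sym, (ar r).-tuple A -> bool).

Lemma tsat_collapse (C : At -> Prop)
  (HC : forall a, C a -> definable avars adef (@frag1 sym ar) a)
  (f : tform ar At) : atoms_in C f -> forall V, sorted ltn V -> wf avars V f ->
  forall X : assign A V -> K, tsat adef rel f X -> tsat adef rel f (collapse X).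
Proof.
elim: f => [r xs p | x y p | a | g IHg h IHh | g IHg h IHh | x g IH | x g IH]
  /= Cf V sV Wf X.
- by move=> H s; rewrite /collapse chiK_neq0; apply: H.
- by move=> H s; rewrite /collapse chiK_neq0; apply: H.
- have /implyP Himp := keval_frag1 HK rel X (HC a Cf V sV Wf) (fun _ => None).
  by move=> /Himp; rewrite /sent_val /collapse => ->.
- case: Cf Wf => [Cg Ch] [Wg Wh] [Hg Hh].
  by split; [apply: IHg | apply: IHh].
- case: Cf Wf => [Cg Ch] [Wg Wh] [Y [Z [HYZ [Hg Hh]]]].
  exists (collapse Y), (collapse Z).
  split; first by move=> s; rewrite /collapse -(chiKD HK) HYZ.
  by split; [apply: IHg | apply: IHh].
- case: Wf => xV Wg [Y [HY Hg]].
  exists (collapse Y); split; first by move=> s b; rewrite /collapse HY.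
  by apply: IH => //; apply: ins_sorted.
- case: Wf => xV Wg [Y [HY Hg]].
  exists (collapse Y); split; first by move=> s; rewrite /collapse HY (chiK_sum HK).
  by apply: IH => //; apply: ins_sorted.
Qed.

Lemma tsat_uncollapse (Hd : plus_dense K) (D : At -> Prop)
  (HD : forall a, D a -> definable avars adef (@frag2 sym ar) a)
  (f : tform ar At) : atoms_in D f -> forall V, sorted ltn V -> wf avars V f ->
  forall X : assign A V -> K, tsat adef rel f (collapse X) -> tsat adef rel f X.
Proof.
elim: f => [r xs p | x y p | a | g IHg h IHh | g IHg h IHh | x g IH | x g IH]
  /= Df V sV Wf X.
- by move=> H s; rewrite -chiK_neq0; apply: H.
- by move=> H s; rewrite -chiK_neq0; apply: H.
- have /implyP Himp := keval_frag2 HK rel X (HD a Df V sV Wf) (fun _ => None).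
  by rewrite /sent_val /collapse => H; apply: Himp; move: H; case: (keval _ _ _ _ _).
- case: Df Wf => [Dg Dh] [Wg Wh] [Hg Hh].
  by split; [apply: IHg | apply: IHh].
- case: Df Wf => [Dg Dh] [Wg Wh] [Y [Z [HYZ [Hg Hh]]]].
  have [Y' [Z' [HYZ' [eY eZ]]]] := split_team2 Hd HYZ.
  exists Y', Z'; split=> //.
  by split; [apply: IHg; rewrite // /collapse eY | apply: IHh; rewrite // /collapse eZ].
- (* the duplicated team is X o restrict, whose collapse is Y *)
  case: Wf => xV Wg [Y [HY Hg]].
  have uV : uniq V := sorted_uniq ltn_trans ltnn sV.
  exists (fun t => X (restrict t)); split; first by move=> s b; rewrite restrict_ext.
  apply: IH; rewrite ?ins_sorted //.
  suff -> : collapse (fun t => X (restrict t)) = Y by [].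
  by apply: functional_extensionality => t; rewrite -{2}(ext_restrict uV t) HY.
- (* lift the Boolean supplementing function (s, a) |-> Y (s[a/x]) to K *)
  case: Wf => xV Wg [Y [HY Hg]].
  have uV : uniq V := sorted_uniq ltn_trans ltnn sV.
  have [F [HXF HFY]] := split_team_sum Hd (Y := fun s a => Y (ext x s a)) HY.
  exists (fun t => F (restrict t) (xval t)); split.
    by move=> s; rewrite HXF; apply: eq_bigr => a _; rewrite restrict_ext ?xval_ext.
  apply: IH; rewrite ?ins_sorted //.
  suff -> : collapse (fun t => F (restrict t) (xval t)) = Y by [].
  by apply: functional_extensionality => t; rewrite /collapse HFY ext_restrict.
Qed.

End TeamTransfer.

Theorem mainTheorem6
  (K : comNzSemiRingType) (HKpos : positive_sr K)
  (sym : Type) (ar : sym -> nat)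
  (At : Type) (avars : At -> seq nat)
  (adef : At -> forall V : seq nat, kform ar (size V))
  (C D : At -> Prop)
  (HC : forall a, C a -> definable avars adef (@frag1 sym ar) a)
  (HD : forall a, D a -> definable avars adef (@frag2 sym ar) a)
  (phi psi : tform ar At) (HphiC : atoms_in C phi) (HpsiD : atoms_in D psi)
  (A : finType) (rel : forall r : sym, (ar r).-tuple A -> bool)
  (V : seq nat) (HV : sorted ltn V)
  (X : assign A V -> K) :
  (wf avars V phi ->
     tsat adef rel phi X -> tsat adef rel phi (collapse X)) /\
  (plus_dense K -> wf avars V psi ->
     tsat adef rel psi (collapse X) -> tsat adef rel psi X).
Proof.
split.
- by move=> Wphi; apply: (tsat_collapse HKpos HC HphiC HV Wphi).
- by move=> Hd Wpsi; apply: (tsat_uncollapse HKpos Hd HD HpsiD HV Wpsi).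
Qed.
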